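(* Let $(X,d)$ be a complete metric space and let $T\colon X\to X$ satisfy (CM): for all $x,y\in X$, $x\neq y$ implies $d(Tx,Ty)<\frac{1}{2}\{d(x,Tx)+d(y,Ty)\}$. Then the following are equivalent: (i) $\lim_{n\to\infty}d(T^nx,T^{n+1}x)=0$ for every $x\in X$; (ii) $T$ has a unique fixed point $z\in X$ and the sequence $(T^nx)_n$ converges to $z$ for every $x\in X$.
   Context: $T^n$ denotes the $n$-fold composition of $T$. *)

From Stdlib Require Import Reals.
Open Scope R_scope.

Definition is_metric {X : Type} (d : X -> X -> R) : Prop :=
  (forall x y, 0 <= d x y) /\
  (forall x y, d x y = 0 <-> x = y) /\
  (forall x y, d x y = d y x) /\
  (forall x y z, d x z <= d x y + d y z).

Definition seq_cv {X : Type} (d : X -> X -> R) (u : nat -> X) (l : X) : Prop :=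
  forall eps, 0 < eps -> exists N, forall n, (N <= n)%nat -> d (u n) l < eps.

Definition cauchy_seq {X : Type} (d : X -> X -> R) (u : nat -> X) : Prop :=
  forall eps, 0 < eps -> exists N, forall m n, (N <= m)%nat -> (N <= n)%nat ->
    d (u m) (u n) < eps.

Definition complete_metric {X : Type} (d : X -> X -> R) : Prop :=
  forall u : nat -> X, cauchy_seq d u -> exists l, seq_cv d u l.

Fixpoint iter_fun {X : Type} (n : nat) (T : X -> X) (x : X) : X :=
  match n with
  | O => x
  | S k => T (iter_fun k T x)
  end.

Definition CM {X : Type} (d : X -> X -> R) (T : X -> X) : Prop :=
  forall x y, x <> y -> d (T x) (T y) < (1/2) * (d x (T x) + d y (T y)).

(* Applying (CM) to [u] and [v] and using the triangle inequality twice gives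
   d(u, v) <= 3/2 (d(u, Tu) + d(v, Tv)).  Hence, if the displacements
   d(T^n x, T^(n+1) x) tend to 0, the orbit of x is Cauchy; its limit z is fixed
   because (CM) bounds d(z, Tz) by 2 d(z, T^(n+1) x) + d(T^n x, T^(n+1) x).
   (CM) also forbids two distinct fixed points, so all orbits share the same
   limit.  Conversely, convergence of an orbit forces its displacements to 0. *)
From Stdlib Require Import Reals Lra Lia Classical.
Open Scope R_scope.

Lemma Un_cv_0_nonneg (u : nat -> R) : (forall n, 0 <= u n) ->
  Un_cv u 0 <-> forall eps, 0 < eps -> exists N, forall n, (N <= n)%nat -> u n < eps.
Proof.
  intros u_ge0; unfold Un_cv, R_dist.
  split; intros cv eps eps_gt0; destruct (cv eps eps_gt0) as [N HN]; exists N;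
    intros n le_Nn; specialize (HN n le_Nn);
    rewrite Rminus_0_r, Rabs_right in * by (apply Rle_ge, u_ge0); exact HN.
Qed.

Section Metric.
Context {X : Type} {d : X -> X -> R} (hmet : is_metric d).

Lemma dist_ge0 x y : 0 <= d x y.
Proof. apply hmet. Qed.

Lemma dist_self x : d x x = 0.
Proof. apply hmet; reflexivity. Qed.

Lemma dist_sym x y : d x y = d y x.
Proof. apply hmet. Qed.

Lemma dist_triangle x y z : d x z <= d x y + d y z.
Proof. apply hmet. Qed.

Lemma dist_eq0 x y : d x y = 0 -> x = y.
Proof. apply hmet. Qed.

Lemma orbit_displacement_cv0 {T : X -> X} {x z} :
  seq_cv d (fun n => iter_fun n T x) z ->
  Un_cv (fun n => d (iter_fun n T x) (iter_fun (S n) T x)) 0.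
Proof.
  intros cv; apply Un_cv_0_nonneg; [intros; apply dist_ge0 |].
  intros eps eps_gt0; destruct (cv (eps / 2)) as [N HN]; [lra |].
  exists N; intros n le_Nn.
  pose proof (HN n le_Nn); pose proof (HN (S n) ltac:(lia)).
  pose proof (dist_triangle (iter_fun n T x) z (iter_fun (S n) T x)).
  rewrite (dist_sym z) in *; lra.
Qed.

Section Contractive.
Context {T : X -> X} (hCM : CM d T).

Lemma CM_le x y : d (T x) (T y) <= (1/2) * (d x (T x) + d y (T y)).
Proof.
  destruct (classic (x = y)) as [<- | neq_xy]; [| left; apply hCM; exact neq_xy].
  rewrite dist_self; pose proof (dist_ge0 x (T x)); lra.
Qed.

Lemma CM_fixed_point_unique {z w} : T z = z -> T w = w -> w = z.
Proof.
  intros Tz Tw; apply NNPP; intros neq_wz.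
  pose proof (hCM w z neq_wz) as CM_wz; rewrite Tz, Tw, !dist_self in CM_wz.
  pose proof (dist_ge0 w z); lra.
Qed.

Lemma CM_dist_le_displacement u v :
  d u v <= 3/2 * (d u (T u) + d v (T v)).
Proof.
  pose proof (CM_le u v).
  pose proof (dist_triangle u (T u) v); pose proof (dist_triangle (T u) (T v) v).
  rewrite (dist_sym (T v) v) in *; lra.
Qed.

Section Orbit.
Context {x : X} (displacement_cv0 :
  forall eps, 0 < eps -> exists N, forall n, (N <= n)%nat ->
    d (iter_fun n T x) (iter_fun (S n) T x) < eps).

Lemma CM_orbit_cauchy : cauchy_seq d (fun n => iter_fun n T x).
Proof.
  intros eps eps_gt0; destruct (displacement_cv0 (eps / 3)) as [N HN]; [lra |].
  exists N; intros m n le_Nm le_Nn.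
  pose proof (HN m le_Nm); pose proof (HN n le_Nn).
  pose proof (CM_dist_le_displacement (iter_fun m T x) (iter_fun n T x)); simpl in *; lra.
Qed.

Lemma CM_orbit_limit_fixed {z} : seq_cv d (fun n => iter_fun n T x) z -> T z = z.
Proof.
  intros cv; apply eq_sym, dist_eq0, Rle_antisym; [| apply dist_ge0].
  apply Rle_plus_epsilon; intros eps eps_gt0; rewrite Rplus_0_l.
  destruct (displacement_cv0 (eps / 2)) as [N1 HN1]; [lra |].
  destruct (cv (eps / 4)) as [N2 HN2]; [lra |].
  pose (n := (N1 + N2)%nat).
  pose proof (HN1 n ltac:(lia)) as small_displacement.
  pose proof (HN2 (S n) ltac:(lia)) as close_to_z; simpl in *.
  pose proof (CM_le (iter_fun n T x) z).
  pose proof (dist_triangle z (T (iter_fun n T x)) (T z)).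
  rewrite (dist_sym (T _) z) in close_to_z; lra.
Qed.

End Orbit.

Lemma CM_orbit_cv_fixed_point x : complete_metric d ->
  Un_cv (fun n => d (iter_fun n T x) (iter_fun (S n) T x)) 0 ->
  exists z, T z = z /\ seq_cv d (fun n => iter_fun n T x) z.
Proof.
  intros hcomp cv0.
  pose proof (proj1 (Un_cv_0_nonneg _ (fun n => dist_ge0 _ _)) cv0) as displacement_cv0.
  destruct (hcomp _ (CM_orbit_cauchy displacement_cv0)) as [z cv].
  exists z; split; [exact (CM_orbit_limit_fixed displacement_cv0 cv) | exact cv].
Qed.

End Contractive.
End Metric.

Theorem theorem5p2 (X : Type) (d : X -> X -> R) (T : X -> X)
  (hne : inhabited X) (hmet : is_metric d) (hcomp : complete_metric d) (hCM : CM d T) :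
  (forall x : X, Un_cv (fun n => d (iter_fun n T x) (iter_fun (S n) T x)) 0)
  <->
  (exists z : X, T z = z /\ (forall w : X, T w = w -> w = z) /\
     (forall x : X, seq_cv d (fun n => iter_fun n T x) z)).
Proof.
  split.
  - intros displacement_cv0.
    pose proof (fun x => CM_orbit_cv_fixed_point hmet hCM x hcomp (displacement_cv0 x))
      as orbit_cv.
    destruct hne as [x0]; destruct (orbit_cv x0) as [z [Tz _]].
    exists z; split; [exact Tz |]; split.
    + intros w Tw; exact (CM_fixed_point_unique hmet hCM Tz Tw).
    + intros x; destruct (orbit_cv x) as [z' [Tz' cv]].
      rewrite (CM_fixed_point_unique hmet hCM Tz Tz') in cv; exact cv.
  - intros [z [_ [_ cv]]] x; exact (orbit_displacement_cv0 hmet (cv x)).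
Qed.
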